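(* Let $\mathbf p=(p_1,p_2)^T\in\mathbb{Z}^2\setminus\{\mathbf0\}$ be such that $\kappa=\gcd(|p_1|,|p_2|)$ is odd. Then there exists a sequence of positive integers $N$ increasing without bound such that for each such $N$ and every $\mathbf a\in\mathcal D$, any two non-consecutive lattice points of $\Sigma'_{\mathbf a}$ cannot both lie in $D_{\mathbf p}$; i.e. if $\mathbf x,\mathbf y\in\Sigma'_{\mathbf a}\cap D_{\mathbf p}$ then $\mathbf y\in\{\mathbf x,\widehat{\mathbf x+\mathbf p},\widehat{\mathbf x-\mathbf p}\}$.
   Context: For a positive integer $N$: $\mathcal D=[-N,N]^2\cap\mathbb{Z}^2$; for $\mathbf k\in\mathbb{Z}^2$, $\widehat{\mathbf k}$ is the unique element of $\mathcal D$ with $\mathbf k-\widehat{\mathbf k}\in(2N+1)\mathbb{Z}^2$; $\Sigma'_{\mathbf a}=\{\widehat{\mathbf a+k\mathbf p}:k\in\mathbb{Z}\}$ for $\mathbf a\in\mathcal D$; and $D_{\mathbf p}=\{\mathbf x\in\mathcal D:|\mathbf x|<|\mathbf p|\}$. Here $\gcd(p_1,0)=|p_1|$. *)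

From Stdlib Require Import ZArith.
Open Scope Z_scope.

Definition pt := (Z * Z)%type.

Definition inD (N : Z) (x : pt) : Prop :=
  -N <= fst x <= N /\ -N <= snd x <= N.

Definition hat1 (N c : Z) : Z := ((c + N) mod (2 * N + 1)) - N.

(* \widehat{k}: the unique element of D congruent to k modulo (2N+1)Z^2 *)
Definition hat (N : Z) (k : pt) : pt := (hat1 N (fst k), hat1 N (snd k)).

Definition padd (x y : pt) : pt := (fst x + fst y, snd x + snd y).
Definition psub (x y : pt) : pt := (fst x - fst y, snd x - snd y).
Definition pscale (k : Z) (x : pt) : pt := (k * fst x, k * snd x).

Definition norm2 (x : pt) : Z := fst x * fst x + snd x * snd x.

Definition inSigma (N : Z) (p a x : pt) : Prop :=
  exists k : Z, x = hat N (padd a (pscale k p)).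

Definition inDp (N : Z) (p x : pt) : Prop :=
  inD N x /\ norm2 x < norm2 p.

(** Choose [N] so that [2N+1] is an odd multiple of [g = gcd(p1,p2)] exceeding [2|p|^2].
    Two points [x], [y] of [Σ'_a] differ by [m p + (2N+1) v] for integers [m] and a
    lattice vector [v]. If both lie in [D_p], then [|y - x| < 2|p|], so the cross
    product of [y - x] with [p], which equals [(2N+1) (v × p)], has absolute value
    below [2|p|^2 < 2N+1]; hence [v × p = 0]. As [p / g] is primitive, [g v] is an
    integer multiple of [p], and since [g] divides [2N+1] so is [y - x = h p]. The
    norm bound forces [|h| <= 1], and reducing [x + h p] into [D] gives [y]. *)

From Stdlib Require Import ZArith Lia Psatz.
Open Scope Z_scope.

Definition cross (x y : pt) : Z := fst x * snd y - snd x * fst y.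

Lemma norm2_pos (p : pt) : p <> (0, 0) -> 0 < norm2 p.
Proof.
  destruct p as [p1 p2]; unfold norm2; cbn [fst snd]; intros hp.
  destruct (Z.eq_dec p1 0), (Z.eq_dec p2 0); subst; try congruence; nia.
Qed.

Lemma norm2_pscale (h : Z) (p : pt) : norm2 (pscale h p) = h * h * norm2 p.
Proof. unfold norm2, pscale; cbn [fst snd]; ring. Qed.

Lemma norm2_psub_lt (n : Z) (x y : pt) :
  norm2 x < n -> norm2 y < n -> norm2 (psub y x) < 4 * n.
Proof.
  destruct x as [x1 x2], y as [y1 y2]; unfold norm2, psub; cbn [fst snd]; intros Hx Hy.
  assert (Hpar : (y1 - x1) * (y1 - x1) + (y2 - x2) * (y2 - x2)
                 + ((y1 + x1) * (y1 + x1) + (y2 + x2) * (y2 + x2))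
                 = 2 * ((x1 * x1 + x2 * x2) + (y1 * y1 + y2 * y2))) by ring.
  pose proof (Z.square_nonneg (y1 + x1)); pose proof (Z.square_nonneg (y2 + x2)).
  lia.
Qed.

Lemma padd_psub (x y : pt) : padd x (psub y x) = y.
Proof. destruct x, y; unfold padd, psub; cbn [fst snd]; f_equal; ring. Qed.

Lemma cross_sq_le (x y : pt) : cross x y * cross x y <= norm2 x * norm2 y.
Proof.
  destruct x as [x1 x2], y as [y1 y2]; unfold cross, norm2; cbn [fst snd].
  assert (Hlagrange : (x1 * y2 - x2 * y1) * (x1 * y2 - x2 * y1)
                      + (x1 * y1 + x2 * y2) * (x1 * y1 + x2 * y2)
                      = (x1 * x1 + x2 * x2) * (y1 * y1 + y2 * y2)) by ring.
  pose proof (Z.square_nonneg (x1 * y1 + x2 * y2)).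
  lia.
Qed.

Lemma cross_lin_comb (m q : Z) (p v : pt) :
  cross (padd (pscale m p) (pscale q v)) p = q * cross v p.
Proof. unfold cross, padd, pscale; cbn [fst snd]; ring. Qed.

Lemma cross_lin_comb_eq0 (m q : Z) (p v : pt) :
  2 * norm2 p < q -> norm2 (padd (pscale m p) (pscale q v)) < 4 * norm2 p ->
  cross v p = 0.
Proof.
  intros Hq Hw.
  pose proof (cross_sq_le (padd (pscale m p) (pscale q v)) p) as Hc.
  rewrite cross_lin_comb in Hc.
  set (w := padd (pscale m p) (pscale q v)) in *.
  assert (Hw0 : 0 <= norm2 w) by (unfold norm2; nia).
  set (c := cross v p) in *; set (n := norm2 p) in *.
  assert (Hwn : norm2 w * n < 2 * n * (2 * n)) by nia.
  assert (Hnq : 2 * n * (2 * n) < q * q) by nia.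
  assert (Hcq : c * c * (q * q) < 1 * (q * q)) by nia.
  assert (c * c < 1) by nia.
  nia.
Qed.

(* Since [p / g] is primitive, a lattice vector parallel to [p] is an integer
   multiple of [p / g]. *)
Lemma cross_eq0_gcd_multiple (v p : pt) :
  cross v p = 0 -> exists s, pscale (Z.gcd (fst p) (snd p)) v = pscale s p.
Proof.
  destruct v as [v1 v2], p as [p1 p2]; unfold cross, pscale; cbn [fst snd]; intros Hvp.
  set (g := Z.gcd p1 p2).
  destruct (Z.eq_dec g 0) as [Hg0 | Hg0].
  { exists 0. rewrite Hg0. reflexivity. }
  destruct (Z.gcd_divide_l p1 p2) as [b1 Hb1].
  destruct (Z.gcd_divide_r p1 p2) as [b2 Hb2].
  destruct (Z.gcd_bezout p1 p2 g eq_refl) as [u [t Hut]].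
  fold g in Hb1, Hb2; clearbody g; subst p1 p2.
  assert (Hb : u * b1 + t * b2 = 1).
  { apply (Z.mul_reg_r _ _ g Hg0). rewrite <- Hut at 2. ring. }
  assert (Hpar : v1 * b2 = v2 * b1).
  { apply (Z.mul_reg_r _ _ g Hg0). rewrite <- Z.sub_move_0_r, <- Hvp. ring. }
  exists (u * v1 + t * v2).
  f_equal.
  - transitivity (g * v1 * (u * b1 + t * b2)); [rewrite Hb; ring |].
    transitivity (g * (u * v1 * b1 + t * (v1 * b2))); [ring | rewrite Hpar; ring].
  - transitivity (g * v2 * (u * b1 + t * b2)); [rewrite Hb; ring |].
    transitivity (g * (u * (v2 * b1) + t * v2 * b2)); [ring | rewrite <- Hpar; ring].
Qed.

Lemma hat1_sub (N c : Z) : hat1 N c = c - (2 * N + 1) * ((c + N) / (2 * N + 1)).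
Proof. unfold hat1. rewrite Z.mod_eq by lia. ring. Qed.

Lemma hat1_id (N c : Z) : -N <= c <= N -> hat1 N c = c.
Proof. intros H. unfold hat1. rewrite Z.mod_small by lia. ring. Qed.

Lemma hat_id (N : Z) (x : pt) : inD N x -> hat N x = x.
Proof.
  destruct x as [x1 x2]; intros [H1 H2]; cbn [fst snd] in *.
  unfold hat; cbn [fst snd]. rewrite !hat1_id by assumption. reflexivity.
Qed.

Lemma inSigma_psub (N : Z) (p a x y : pt) :
  inSigma N p a x -> inSigma N p a y ->
  exists m v, psub y x = padd (pscale m p) (pscale (2 * N + 1) v).
Proof.
  intros [k ->] [l ->].
  destruct a as [a1 a2], p as [p1 p2].
  unfold hat, psub, padd, pscale; cbn [fst snd]; rewrite !hat1_sub.
  exists (l - k), ((a1 + k * p1 + N) / (2 * N + 1) - (a1 + l * p1 + N) / (2 * N + 1),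
                   (a2 + k * p2 + N) / (2 * N + 1) - (a2 + l * p2 + N) / (2 * N + 1)).
  cbn [fst snd]. f_equal; ring.
Qed.

Lemma exists_large_odd_multiple (g B : Z) :
  0 <= g -> Z.odd g = true -> exists N, B < N /\ (g | 2 * N + 1).
Proof.
  intros Hg Hodd.
  destruct (proj1 (Z.odd_spec g) Hodd) as [c Hc].
  set (T := Z.abs B + 1).
  exists (c * (2 * T + 1) + T). split.
  - assert (0 <= c * (2 * T + 1)) by (apply Z.mul_nonneg_nonneg; lia). lia.
  - exists (2 * T + 1). lia.
Qed.

Lemma inSigma_inDp_psub (N : Z) (p a x y : pt) :
  2 * norm2 p < 2 * N + 1 -> (Z.gcd (fst p) (snd p) | 2 * N + 1) ->
  inSigma N p a x -> inSigma N p a y -> inDp N p x -> inDp N p y ->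
  exists h, -1 <= h <= 1 /\ psub y x = pscale h p.
Proof.
  intros Hq [r Hr] Hx Hy [_ Hxp] [_ Hyp].
  destruct (inSigma_psub N p a x y Hx Hy) as (m & v & Hw).
  assert (Hsmall : norm2 (psub y x) < 4 * norm2 p) by now apply norm2_psub_lt.
  rewrite Hw in Hsmall.
  destruct (cross_eq0_gcd_multiple v p (cross_lin_comb_eq0 m _ p v Hq Hsmall))
    as [s Hs].
  assert (Hyx : psub y x = pscale (m + r * s) p).
  { rewrite Hw, Hr.
    destruct p as [p1 p2], v as [v1 v2]; unfold pscale, padd in *; cbn [fst snd] in *.
    injection Hs as Hs1 Hs2.
    f_equal; [rewrite <- Z.mul_assoc, Hs1 | rewrite <- Z.mul_assoc, Hs2]; ring. }
  exists (m + r * s); split; [| exact Hyx].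
  rewrite <- Hw, Hyx, norm2_pscale in Hsmall.
  assert (Hn : 0 < norm2 p) by (destruct x; unfold norm2 in *; nia).
  assert ((m + r * s) * (m + r * s) < 4)
    by (apply (Z.mul_lt_mono_pos_r (norm2 p)); lia).
  nia.
Qed.

Theorem lemma6 (p : pt) (hp : p <> (0, 0))
  (hodd : Z.odd (Z.gcd (fst p) (snd p)) = true) :
  forall M : Z, exists N : Z, M < N /\ 0 < N /\
    forall a : pt, inD N a ->
    forall x y : pt,
      inSigma N p a x -> inSigma N p a y ->
      inDp N p x -> inDp N p y ->
      y = x \/ y = hat N (padd x p) \/ y = hat N (psub x p).
Proof.
  intros M.
  pose proof (norm2_pos p hp) as Hn.
  destruct (exists_large_odd_multiple _ (Z.abs M + norm2 p)
              (Z.gcd_nonneg _ _) hodd) as [N [HN Hdiv]].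
  exists N; split; [lia | split; [lia |]].
  intros a _ x y Hx Hy Hxp Hyp.
  destruct (inSigma_inDp_psub N p a x y ltac:(lia) Hdiv Hx Hy Hxp Hyp)
    as [h [Hh Hyx]].
  assert (Hy_eq : y = padd x (pscale h p)) by now rewrite <- Hyx, padd_psub.
  assert (Hyh : hat N (padd x (pscale h p)) = y)
    by (rewrite <- Hy_eq; apply hat_id, Hyp).
  assert (h = 0 \/ h = 1 \/ h = -1) as [-> | [-> | ->]] by lia.
  - left. rewrite Hy_eq.
    destruct x, p; unfold padd, pscale; cbn [fst snd]; f_equal; ring.
  - right; left. replace (padd x p) with (padd x (pscale 1 p)); [now symmetry |].
    destruct x, p; unfold padd, pscale; cbn [fst snd]; f_equal; ring.
  - right; right. replace (psub x p) with (padd x (pscale (-1) p)); [now symmetry |].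
    destruct x, p; unfold padd, psub, pscale; cbn [fst snd]; f_equal; ring.
Qed.
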